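(* Let $G$ be a Polish group. Then every Haar meager subset of $G$ is meager in $G$.
   Context: Let $G$ be a Polish group (not necessarily abelian). A set $A\subseteq G$ is called Haar meager if there exist a Borel set $B\subseteq G$ with $A\subseteq B$, a compact metric space $K$, and a continuous map $f\colon K\to G$ such that $f^{-1}(gBh)$ is meager in $K$ for every $g,h\in G$. *)

From Stdlib Require Import Reals List.
Open Scope R_scope.

Record MetricSpace := {
  carrier :> Type;
  dist : carrier -> carrier -> R;
  dist_nonneg : forall x y, 0 <= dist x y;
  dist_eq0 : forall x y, dist x y = 0 <-> x = y;
  dist_sym : forall x y, dist x y = dist y x;
  dist_tri : forall x y z, dist x z <= dist x y + dist y z
}.

Section Topology.
Variable M : MetricSpace.

Definition open_set (U : M -> Prop) : Prop :=
  forall x, U x -> exists eps, 0 < eps /\ forall y, dist M x y < eps -> U y.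

Definition closure (A : M -> Prop) : M -> Prop :=
  fun x => forall eps, 0 < eps -> exists y, A y /\ dist M x y < eps.

Definition interior (A : M -> Prop) : M -> Prop :=
  fun x => exists eps, 0 < eps /\ forall y, dist M x y < eps -> A y.

Definition nowhere_dense (A : M -> Prop) : Prop :=
  forall x, ~ interior (closure A) x.

Definition meager (A : M -> Prop) : Prop :=
  exists N : nat -> M -> Prop,
    (forall n, nowhere_dense (N n)) /\ (forall x, A x -> exists n, N n x).

Inductive borel : (M -> Prop) -> Prop :=
| borel_open : forall U, open_set U -> borel U
| borel_compl : forall A, borel A -> borel (fun x => ~ A x)
| borel_union : forall F : nat -> M -> Prop,
    (forall n, borel (F n)) -> borel (fun x => exists n, F n x)
| borel_ext : forall A B, borel A -> (forall x, A x <-> B x) -> borel B.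

Definition cauchy (u : nat -> M) : Prop :=
  forall eps, 0 < eps -> exists N, forall m n, (N <= m)%nat -> (N <= n)%nat ->
    dist M (u m) (u n) < eps.

Definition converges_to (u : nat -> M) (l : M) : Prop :=
  forall eps, 0 < eps -> exists N, forall n, (N <= n)%nat -> dist M (u n) l < eps.

Definition complete : Prop :=
  forall u, cauchy u -> exists l, converges_to u l.

Definition separable : Prop :=
  exists s : nat -> M, forall x eps, 0 < eps -> exists n, dist M x (s n) < eps.

Definition compact : Prop :=
  forall (I : Type) (U : I -> M -> Prop),
    (forall i, open_set (U i)) -> (forall x, exists i, U i x) ->
    exists l : list I, forall x, exists i, In i l /\ U i x.
End Topology.

Definition continuous (M N : MetricSpace) (f : M -> N) : Prop :=
  forall x eps, 0 < eps -> exists delta, 0 < delta /\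
    forall y, dist M x y < delta -> dist N (f x) (f y) < eps.

Record PolishGroup := {
  pg_space :> MetricSpace;
  pg_mul : pg_space -> pg_space -> pg_space;
  pg_inv : pg_space -> pg_space;
  pg_one : pg_space;
  pg_assoc : forall x y z, pg_mul x (pg_mul y z) = pg_mul (pg_mul x y) z;
  pg_mul1 : forall x, pg_mul pg_one x = x;
  pg_mulV : forall x, pg_mul (pg_inv x) x = pg_one;
  pg_complete : complete pg_space;
  pg_separable : separable pg_space;
  pg_mul_cont : forall x y eps, 0 < eps -> exists delta, 0 < delta /\
    forall x' y', dist pg_space x x' < delta -> dist pg_space y y' < delta ->
      dist pg_space (pg_mul x y) (pg_mul x' y') < eps;
  pg_inv_cont : continuous pg_space pg_space pg_inv
}.

Record CompactMetricSpace := {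
  cms_space :> MetricSpace;
  cms_compact : compact cms_space;
  cms_nonempty : inhabited cms_space
}.

Definition haar_meager (G : PolishGroup) (A : G -> Prop) : Prop :=
  exists B : G -> Prop, borel G B /\ (forall x, A x -> B x) /\
  exists (K : CompactMetricSpace) (f : K -> G),
    continuous K G f /\
    forall g h : G,
      meager K (fun k => exists b, B b /\ f k = pg_mul G (pg_mul G g b) h).

(* A Borel set B differs from an open set U by a meager set, so if U is empty then
   A, a subset of B, is meager. Otherwise write U \ B as a union of nowhere dense sets
   N_n and fix a point k0 and a dense sequence (s_j) in the compact space K. By the
   Baire category theorem in G there is c with c f(k0) in U such that no c f(s_j)
   lies in the closure of any N_n. Then k |-> c f(k) pulls every N_n back to a
   nowhere dense subset of K, so the nonempty open set {k | c f(k) in U} is covered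
   by the meager set f^-1(c^-1 B) and countably many nowhere dense sets,
   contradicting the Baire category theorem in K. *)

From Stdlib Require Import Reals List Lra Lia Classical ClassicalEpsilon Cantor.
(* Imported after [Reals] so that [dist] is the metric of [Defs]. *)
From Pilot Require Import Defs.
Open Scope R_scope.

Section Metric.
Variable M : MetricSpace.

Lemma dist_refl (x : M) : dist M x x = 0.
Proof. apply dist_eq0. reflexivity. Qed.

Lemma subset_closure (S : M -> Prop) x : S x -> closure M S x.
Proof. intros Sx e He. exists x. rewrite dist_refl. auto. Qed.

Lemma closure_idem (S : M -> Prop) x : closure M (closure M S) x -> closure M S x.
Proof.
  intros Hx e He. destruct (Hx (e/2)) as [y [Hy Hxy]]; [lra|].
  destruct (Hy (e/2)) as [z [Sz Hyz]]; [lra|].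
  exists z. split; auto. pose proof (dist_tri M x y z). lra.
Qed.

Lemma open_not_closure (S : M -> Prop) : open_set M (fun x => ~ closure M S x).
Proof.
  intros x Hx. apply not_all_ex_not in Hx as [e He].
  apply imply_to_and in He as [He Hn].
  exists (e/2). split; [lra|]. intros z Hz Hcz. apply Hn.
  destruct (Hcz (e/2)) as [y [Sy Hzy]]; [lra|]. exists y. split; auto.
  pose proof (dist_tri M x z y). lra.
Qed.

Lemma nowhere_dense_closure (S : M -> Prop) :
  nowhere_dense M S -> nowhere_dense M (closure M S).
Proof.
  intros HS x [e [He Hball]]. apply (HS x). exists e. split; auto.
  intros y Hy. apply closure_idem. auto.
Qed.

Lemma nowhere_dense_frontier (U : M -> Prop) :
  open_set M U -> nowhere_dense M (fun x => closure M U x /\ ~ U x).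
Proof.
  intros HU x [e [He Hball]].
  assert (Hx : closure M U x).
  { apply closure_idem. intros e' He'.
    destruct (Hball x ltac:(rewrite dist_refl; lra) e' He') as [z [[Hz _] Hxz]]. eauto. }
  destruct (Hx e He) as [y [Uy Hxy]].
  destruct (HU y Uy) as [e1 [He1 Hball1]].
  pose proof (Rmin_l e1 (e - dist M x y)); pose proof (Rmin_r e1 (e - dist M x y)).
  assert (Hpos : 0 < Rmin e1 (e - dist M x y)) by (apply Rmin_pos; lra).
  destruct (Hball y Hxy _ Hpos) as [z [[_ Uz] Hyz]].
  apply Uz, Hball1. lra.
Qed.

Lemma meager_subset (S T : M -> Prop) :
  meager M T -> (forall x, S x -> T x) -> meager M S.
Proof. intros [N [HN Hcov]] HST. exists N. auto. Qed.

Lemma nowhere_dense_meager (S : M -> Prop) : nowhere_dense M S -> meager M S.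
Proof. intros HS. exists (fun _ => S). split; [auto | intros x Sx; exists 0%nat; exact Sx]. Qed.

Lemma meager_empty : meager M (fun _ => False).
Proof.
  apply nowhere_dense_meager. intros x [e [He Hball]].
  destruct (Hball x ltac:(rewrite dist_refl; lra) e He) as [y [[] _]].
Qed.

Lemma meager_countable_union (S : nat -> M -> Prop) :
  (forall n, meager M (S n)) -> meager M (fun x => exists n, S n x).
Proof.
  intros HS. destruct (choice _ HS) as [N HN].
  exists (fun p => N (fst (of_nat p)) (snd (of_nat p))). split.
  - intro p. apply HN.
  - intros x [n Sx]. destruct (proj2 (HN n) x Sx) as [m Hm].
    exists (to_nat (n, m)). rewrite cancel_of_to. exact Hm.
Qed.

Lemma meager_union (S T : M -> Prop) :
  meager M S -> meager M T -> meager M (fun x => S x \/ T x).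
Proof.
  intros HS HT.
  apply meager_subset with (fun x => exists n, (if Nat.eqb n 0 then S else T) x).
  - apply meager_countable_union. intros [|n]; auto.
  - intros x [Sx|Tx]; [exists 0%nat | exists 1%nat]; assumption.
Qed.

Definition has_baire_property (B : M -> Prop) : Prop :=
  exists U, open_set M U /\ meager M (fun x => B x /\ ~ U x)
                         /\ meager M (fun x => U x /\ ~ B x).

Lemma baire_property_compl (B : M -> Prop) :
  has_baire_property B -> has_baire_property (fun x => ~ B x).
Proof.
  intros [U [HU [HBU HUB]]].
  exists (fun x => ~ closure M U x). split; [apply open_not_closure|]. split.
  - apply meager_subset with (fun x => (U x /\ ~ B x) \/ (closure M U x /\ ~ U x)).
    + apply meager_union; [assumption|].
      apply nowhere_dense_meager, nowhere_dense_frontier, HU.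
    + intros x [Bx Hx]. apply NNPP in Hx. tauto.
  - apply meager_subset with (1 := HBU). intros x [Hx Bx]. apply NNPP in Bx.
    split; [assumption|]. intro Ux. apply Hx, subset_closure, Ux.
Qed.

Lemma baire_property_countable_union (B : nat -> M -> Prop) :
  (forall n, has_baire_property (B n)) ->
  has_baire_property (fun x => exists n, B n x).
Proof.
  intros HB. destruct (choice _ HB) as [U HU].
  exists (fun x => exists n, U n x). split; [|split].
  - intros x [n Ux]. destruct (proj1 (HU n) x Ux) as [e [He Hball]].
    exists e. split; eauto.
  - apply meager_subset with (fun x => exists n, B n x /\ ~ U n x).
    + apply meager_countable_union. intro n. apply HU.
    + intros x [[n Bx] Hx]. exists n. split; [assumption|]. intro. apply Hx. eauto.
  - apply meager_subset with (fun x => exists n, U n x /\ ~ B n x).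
    + apply meager_countable_union. intro n. apply HU.
    + intros x [[n Ux] Hx]. exists n. split; [assumption|]. intro. apply Hx. eauto.
Qed.

Lemma borel_has_baire_property (B : M -> Prop) : borel M B -> has_baire_property B.
Proof.
  induction 1 as [U HU| |F _ IH|A B _ [U [HU [HAU HUA]]] HAB].
  - exists U. split; [assumption|].
    split; apply meager_subset with (1 := meager_empty); tauto.
  - apply baire_property_compl. assumption.
  - apply baire_property_countable_union, IH.
  - exists U. split; [assumption|]. split.
    + apply meager_subset with (1 := HAU). intros x. rewrite HAB. tauto.
    + apply meager_subset with (1 := HUA). intros x. rewrite HAB. tauto.
Qed.

End Metric.

Section Baire.
Variable M : MetricSpace.

Lemma nowhere_dense_avoid_ball (N : M -> Prop) : nowhere_dense M N ->
  forall x r, 0 < r -> exists y s, 0 < s /\ dist M x y + s <= r /\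
    forall z, dist M y z <= s -> ~ N z.
Proof.
  intros HN x r Hr.
  assert (exists y, dist M x y < r/2 /\ ~ closure M N y) as [y [Hxy Hy]].
  { apply NNPP. intro Hno. apply (HN x). exists (r/2). split; [lra|].
    intros y Hxy. apply NNPP. eauto. }
  apply not_all_ex_not in Hy as [e He]. apply imply_to_and in He as [He Hfar].
  exists y, (Rmin (e/2) (r/2)).
  pose proof (Rmin_l (e/2) (r/2)); pose proof (Rmin_r (e/2) (r/2)).
  assert (0 < Rmin (e/2) (r/2)) by (apply Rmin_pos; lra).
  split; [assumption|]. split; [lra|].
  intros z Hyz Nz. apply Hfar. exists z. split; [assumption | lra].
Qed.

Lemma nested_balls_common_point (Hc : complete M) (x : nat -> M) (r : nat -> R) :
  (forall n, 0 <= r n) ->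
  (forall n, dist M (x n) (x (S n)) + r (S n) <= r n) ->
  (forall eps, 0 < eps -> exists n, r n < eps) ->
  exists l, forall n, dist M (x n) l <= r n.
Proof.
  intros Hr Hstep Hsmall.
  assert (Hnest : forall k n, dist M (x n) (x (n + k)%nat) + r (n + k)%nat <= r n).
  { induction k as [|k IH]; intro n.
    - rewrite Nat.add_0_r, dist_refl. lra.
    - rewrite Nat.add_succ_r.
      pose proof (dist_tri M (x n) (x (n + k)%nat) (x (S (n + k)))).
      pose proof (IH n); pose proof (Hstep (n + k)%nat). lra. }
  assert (Hinside : forall n m, (n <= m)%nat -> dist M (x n) (x m) <= r n).
  { intros n m Hnm. replace m with (n + (m - n))%nat by lia.
    pose proof (Hnest (m - n)%nat n); pose proof (Hr (n + (m - n))%nat). lra. }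
  assert (Hcauchy : cauchy M x).
  { intros eps He. destruct (Hsmall (eps/2)) as [K HK]; [lra|].
    exists K. intros m n Hm Hn.
    pose proof (Hinside K m Hm); pose proof (Hinside K n Hn).
    pose proof (dist_tri M (x m) (x K) (x n)) as Htri.
    rewrite (dist_sym M (x m) (x K)) in Htri. lra. }
  destruct (Hc x Hcauchy) as [l Hl].
  exists l. intro n. apply Rle_plus_epsilon. intros eps He.
  destruct (Hl eps He) as [K HK].
  pose proof (HK (max n K) ltac:(lia)); pose proof (Hinside n (max n K) ltac:(lia)).
  pose proof (dist_tri M (x n) (x (max n K)) l). lra.
Qed.

Theorem baire_category (Hc : complete M) (V : M -> Prop) (x0 : M) :
  open_set M V -> V x0 ->
  forall N : nat -> M -> Prop, (forall n, nowhere_dense M (N n)) ->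
  exists x, V x /\ forall n, ~ N n x.
Proof.
  intros HV Vx0 N HN.
  destruct (HV x0 Vx0) as [r0 [Hr0 Hball]].
  (* The implication makes the step total, so that choice applies to all pairs. *)
  assert (Hstep : forall np : nat * (M * R), exists q : M * R, 0 < snd (snd np) ->
    0 < snd q /\ dist M (fst (snd np)) (fst q) + snd q <= Rmin (snd (snd np)) (/ INR (S (fst np))) /\
    forall z, dist M (fst q) z <= snd q -> ~ N (fst np) z).
  { intros [n [x r]]; simpl.
    destruct (Rlt_dec 0 r) as [Hr|Hr]; [|exists (x, r); simpl; lra].
    assert (Hrn : 0 < Rmin r (/ INR (S n))) by
      (apply Rmin_pos; [lra | apply Rinv_0_lt_compat, lt_0_INR; lia]).
    destruct (nowhere_dense_avoid_ball (N n) (HN n) x _ Hrn) as [y [s Hys]].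
    exists (y, s). auto. }
  destruct (choice _ Hstep) as [F HF].
  pose (ball := fix ball n := match n with O => (x0, r0 / 2) | S n => F (n, ball n) end).
  assert (Hpos : forall n, 0 < snd (ball n)).
  { induction n as [|n IH]; simpl; [lra|]. apply (HF (n, ball n) IH). }
  assert (Hball_S : forall n,
    dist M (fst (ball n)) (fst (ball (S n))) + snd (ball (S n)) <= Rmin (snd (ball n)) (/ INR (S n)) /\
    forall z, dist M (fst (ball (S n))) z <= snd (ball (S n)) -> ~ N n z).
  { intro n. apply (HF (n, ball n) (Hpos n)). }
  destruct (nested_balls_common_point Hc (fun n => fst (ball n)) (fun n => snd (ball n)))
    as [l Hl].
  - intro n. apply Rlt_le, Hpos.
  - intro n. pose proof (Rmin_l (snd (ball n)) (/ INR (S n))). pose proof (proj1 (Hball_S n)). lra.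
  - intros eps He. destruct (archimed_cor1 eps He) as [K [HK HK0]].
    exists K. destruct K as [|K]; [lia|].
    pose proof (Rmin_r (snd (ball K)) (/ INR (S K))). pose proof (proj1 (Hball_S K)).
    pose proof (dist_nonneg M (fst (ball K)) (fst (ball (S K)))). lra.
  - exists l. split.
    + apply Hball. pose proof (Hl O). simpl in *. lra.
    + intro n. apply (proj2 (Hball_S n)), Hl.
Qed.

Corollary open_nonempty_not_meager (Hc : complete M) (V : M -> Prop) (x0 : M) :
  open_set M V -> V x0 -> ~ meager M V.
Proof.
  intros HV Vx0 [N [HN Hcov]].
  destruct (baire_category Hc V x0 HV Vx0 N HN) as [x [Vx Hx]].
  destruct (Hcov x Vx) as [n Nx]. exact (Hx n Nx).
Qed.

End Baire.

Section Compact.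
Variable M : MetricSpace.
Hypothesis Hk : compact M.

Lemma compact_complete : complete M.
Proof.
  intros u Hu. apply NNPP. intro Hnolim.
  pose (W := fun (N : nat) x =>
    exists e, 0 < e /\ forall m, (N <= m)%nat -> e <= dist M (u m) x).
  assert (HWopen : forall N, open_set M (W N)).
  { intros N x [e [He Hfar]]. exists (e/2). split; [lra|].
    intros y Hxy. exists (e/2). split; [lra|]. intros m Hm.
    pose proof (Hfar m Hm). pose proof (dist_tri M (u m) y x).
    rewrite (dist_sym M y x) in *. lra. }
  assert (HWcover : forall x, exists N, W N x).
  { intro x. apply not_ex_all_not with (n := x) in Hnolim.
    apply not_all_ex_not in Hnolim as [e He]. apply imply_to_and in He as [He Hnot].
    destruct (Hu (e/2)) as [N HN]; [lra|].
    assert (exists n, (N <= n)%nat /\ e <= dist M (u n) x) as [n [Hn Hfar]].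
    { apply NNPP. intro Hno. apply Hnot. exists N. intros n Hn.
      apply Rnot_le_lt. eauto. }
    exists N, (e/2). split; [lra|]. intros m Hm.
    pose proof (HN m n Hm Hn). pose proof (dist_tri M (u n) (u m) x).
    rewrite (dist_sym M (u n) (u m)) in *. lra. }
  destruct (Hk nat W HWopen HWcover) as [l Hl].
  destruct (Hl (u (list_max l))) as [N [HNl [e [He Hfar]]]].
  assert (HN : (N <= list_max l)%nat).
  { pose proof (proj1 (list_max_le l (list_max l)) (le_n _)) as Hall.
    rewrite Forall_forall in Hall. auto. }
  pose proof (Hfar _ HN). rewrite dist_refl in *. lra.
Qed.

Lemma compact_separable : inhabited M -> separable M.
Proof.
  intros [k0].
  assert (Hnet : forall m : nat, exists l : list M,
    forall x, exists y, In y l /\ dist M y x < / INR (S m)).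
  { intro m. apply (Hk M (fun y x => dist M y x < / INR (S m))).
    - intros y x Hx. exists (/ INR (S m) - dist M y x). split; [lra|].
      intros z Hz. pose proof (dist_tri M y x z). lra.
    - intro x. exists x. rewrite dist_refl. apply Rinv_0_lt_compat, lt_0_INR. lia. }
  destruct (choice _ Hnet) as [L HL].
  exists (fun p => nth (snd (of_nat p)) (L (fst (of_nat p))) k0).
  intros x eps He.
  destruct (archimed_cor1 eps He) as [m [Hm Hm0]].
  destruct (HL (pred m) x) as [y [Hy Hyx]].
  destruct (In_nth _ _ k0 Hy) as [j [_ Hj]].
  exists (to_nat (pred m, j)). rewrite cancel_of_to. simpl. rewrite Hj, dist_sym.
  rewrite Nat.succ_pred_pos in Hyx by assumption. lra.
Qed.

End Compact.

Lemma closure_preimage (M N : MetricSpace) (phi : M -> N) (P : N -> Prop) x :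
  continuous M N phi -> closure M (fun y => P (phi y)) x -> closure N P (phi x).
Proof.
  intros Hphi Hx e He. destruct (Hphi x e He) as [d [Hd Hclose]].
  destruct (Hx d Hd) as [y [Py Hxy]]. exists (phi y). auto.
Qed.

Lemma open_preimage (M N : MetricSpace) (phi : M -> N) (U : N -> Prop) :
  continuous M N phi -> open_set N U -> open_set M (fun x => U (phi x)).
Proof.
  intros Hphi HU x Ux. destruct (HU _ Ux) as [e [He Hball]].
  destruct (Hphi x e He) as [d [Hd Hclose]]. exists d. auto.
Qed.

Lemma nowhere_dense_preimage_homeo (M : MetricSpace) (phi psi : M -> M) (N : M -> Prop) :
  continuous M M phi -> continuous M M psi ->
  (forall y, phi (psi y) = y) -> (forall x, psi (phi x) = x) ->
  nowhere_dense M N -> nowhere_dense M (fun x => N (phi x)).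
Proof.
  intros Hphi Hpsi Hphipsi Hpsiphi HN x [e [He Hball]]. apply (HN (phi x)).
  destruct (Hpsi (phi x) e He) as [d [Hd Hclose]]. exists d. split; [assumption|].
  intros y Hy. specialize (Hclose y Hy). rewrite Hpsiphi in Hclose.
  rewrite <- (Hphipsi y). apply closure_preimage; auto.
Qed.

Lemma nowhere_dense_preimage_of_dense (K M : MetricSpace) (phi : K -> M)
  (s : nat -> K) (N : M -> Prop) :
  continuous K M phi -> (forall x eps, 0 < eps -> exists j, dist K x (s j) < eps) ->
  (forall j, ~ closure M N (phi (s j))) -> nowhere_dense K (fun k => N (phi k)).
Proof.
  intros Hphi Hdense Havoid x [e [He Hball]].
  destruct (Hdense x e He) as [j Hj].
  apply (Havoid j), closure_preimage, Hball; assumption.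
Qed.

Section PolishGroupFacts.
Variable G : PolishGroup.
Notation "x * y" := (pg_mul G x y).
Notation "x ^-1" := (pg_inv G x) (at level 3).

Lemma pg_mulrV (x : G) : x * x^-1 = pg_one G.
Proof.
  rewrite <- (pg_mul1 G (x * x^-1)), <- (pg_mulV G x^-1) at 1.
  rewrite <- (pg_assoc G), (pg_assoc G x^-1 x x^-1), (pg_mulV G x), (pg_mul1 G).
  apply pg_mulV.
Qed.

Lemma pg_mulr1 (x : G) : x * pg_one G = x.
Proof. rewrite <- (pg_mulV G x), (pg_assoc G), pg_mulrV. apply pg_mul1. Qed.

Lemma continuous_mulr (a : G) : continuous G G (fun x => x * a).
Proof.
  intros x e He. destruct (pg_mul_cont G x a e He) as [d [Hd Hclose]].
  exists d. split; [assumption|]. intros y Hy. apply Hclose; [assumption|].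
  rewrite dist_refl. assumption.
Qed.

Lemma continuous_mull_comp (K : MetricSpace) (c : G) (f : K -> G) :
  continuous K G f -> continuous K G (fun k => c * f k).
Proof.
  intros Hf k e He. destruct (pg_mul_cont G c (f k) e He) as [d [Hd Hclose]].
  destruct (Hf k d Hd) as [d' [Hd' Hf']]. exists d'. split; [assumption|].
  intros y Hy. apply Hclose; [rewrite dist_refl; assumption | auto].
Qed.

Lemma nowhere_dense_mulr (N : G -> Prop) (a : G) :
  nowhere_dense G N -> nowhere_dense G (fun x => N (x * a)).
Proof.
  apply (nowhere_dense_preimage_homeo G _ (fun x => x * a^-1));
    try apply continuous_mulr; intro x;
    rewrite <- (pg_assoc G); [rewrite (pg_mulV G) | rewrite pg_mulrV]; apply pg_mulr1.
Qed.

Lemma exists_translate_avoiding (O : G -> Prop) (c0 : G) (N : nat -> G -> Prop) (y : nat -> G) :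
  open_set G O -> O c0 -> (forall n, nowhere_dense G (N n)) ->
  exists c, O c /\ forall n j, ~ closure G (N n) (c * y j).
Proof.
  intros HO Oc0 HN.
  destruct (baire_category G (pg_complete G) O c0 HO Oc0
    (fun p x => closure G (N (fst (of_nat p))) (x * y (snd (of_nat p)))))
    as [c [Oc Hc]].
  - intro p. apply nowhere_dense_mulr, nowhere_dense_closure, HN.
  - exists c. split; [assumption|]. intros n j.
    specialize (Hc (to_nat (n, j))). rewrite cancel_of_to in Hc. exact Hc.
Qed.

End PolishGroupFacts.

Theorem theorem2p3 (G : PolishGroup) (A : G -> Prop) :
  haar_meager G A -> meager G A.
Proof.
  intros [B [HB [HAB [K [f [Hf Hmeager]]]]]].
  destruct (borel_has_baire_property G B HB) as [U [HU [HBU HUB]]].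
  destruct (classic (exists u, U u)) as [[u Uu] | Hempty].
  2:{ apply meager_subset with (1 := HBU). intros x Ax.
      split; [auto | intro Ux; apply Hempty; eauto]. }
  exfalso. destruct HUB as [N [HN Hcover]].
  destruct (cms_nonempty K) as [k0].
  destruct (compact_separable K (cms_compact K) (cms_nonempty K)) as [s Hs].
  destruct (exists_translate_avoiding G (fun c => U (pg_mul G c (f k0)))
              (pg_mul G u (pg_inv G (f k0))) N (fun j => f (s j))) as [c [Uc Hc]].
  - apply open_preimage; [apply continuous_mulr | assumption].
  - rewrite <- pg_assoc, pg_mulV, pg_mulr1. assumption.
  - assumption.
  - pose (phi := fun k => pg_mul G c (f k)).
    assert (Hphi : continuous K G phi) by apply continuous_mull_comp, Hf.
    apply (open_nonempty_not_meager K (compact_complete K (cms_compact K))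
             (fun k => U (phi k)) k0 (open_preimage _ _ phi U Hphi HU) Uc).
    apply meager_subset with (fun k =>
      (exists b, B b /\ f k = pg_mul G (pg_mul G (pg_inv G c) b) (pg_one G)) \/
      exists n, N n (phi k)).
    + apply meager_union; [apply Hmeager|].
      apply meager_countable_union. intro n.
      apply nowhere_dense_meager, (nowhere_dense_preimage_of_dense K G phi s (N n) Hphi Hs).
      apply Hc.
    + intros k Uk. destruct (classic (B (phi k))) as [Bk | nBk].
      * left. exists (phi k). split; [assumption|].
        unfold phi. rewrite pg_mulr1, pg_assoc, pg_mulV, pg_mul1. reflexivity.
      * right. apply Hcover. split; assumption.
Qed.
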